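(* Let $c$ be a positive integer and $c/(c+1)\le\vartheta<1$. Let $(Z_t)$ be the random walk of the context with $r=1$. Define the rational function $$\xi(w)=\frac{[(1-\vartheta)(c+1)-1]w^2+[2-(1-\vartheta)(c+1)]w-(1-\vartheta)w^{c+1}-\vartheta}{(1-\vartheta)w^{c+2}-(1-\vartheta)w^{c+1}-w^2+(1+\vartheta)w-\vartheta},\quad w\in(-1,1).$$ Then $\pi(u,c,1,\vartheta)=\xi^{(u)}(0)/u!$ for all $u\in\mathbb{N}$, where $\xi^{(u)}(0)$ is the $u$-th derivative of $\xi$ at $w=0$. Consequently, for the single-agent trust model with prior parameters $\alpha,\beta\in\mathbb{N}$ and $r=1$, $p_{\rm quit}=\pi(u_{\rm crit},c,1,\vartheta)$ with $u_{\rm crit}=\alpha-c\beta+1$.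
   Context: Random walk: for $\vartheta\in(0,1)$ and positive integers $c,r$, let $Z_0=0$ and $Z_t=Z_{t-1}+\Delta_t$ with $\Delta_t$ i.i.d., $\Delta_t=+c$ with probability $1-\vartheta$ and $-r$ with probability $\vartheta$. Define $\pi(u,c,r,\vartheta):=\mathbb{P}(\exists t\ge0: Z_t\ge u)$. Single-agent trust model: $(X_t)$ i.i.d. Bernoulli$(\vartheta)$; $\hat S_t=\sum_{s\le t}X_s\mathbf{1}_{\{A_s=1\}}$, $\hat F_t=\sum_{s\le t}(1-X_s)\mathbf{1}_{\{A_s=1\}}$, $\hat\vartheta_t=\frac{\alpha+\hat S_t}{\alpha+\beta+\hat S_t+\hat F_t}$; $A_t=1$ iff $r\hat\vartheta_n-c(1-\hat\vartheta_n)\ge0$ for all $n\le t-1$; $\tau:=\inf\{t\in\mathbb{N}\cup\{\infty\}: r\hat\vartheta_t-c(1-\hat\vartheta_t)<0\}$; $p_{\rm quit}:=\mathbb{P}(\tau<\infty)$. *)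

From Stdlib Require Import Reals Lra Lia ZArith List.
From Coquelicot Require Import Coquelicot.
Open Scope R_scope.

Fixpoint bool_lists (n : nat) : list (list bool) :=
  match n with
  | O => nil :: nil
  | S n => flat_map (fun l => (true :: l) :: (false :: l) :: nil) (bool_lists n)
  end.

Fixpoint bweight (p : R) (l : list bool) : R :=
  match l with
  | nil => 1
  | b :: l => (if b then p else 1 - p) * bweight p l
  end.

(** The list [l = [x_1; ...; x_T]] viewed as the sequence s |-> x_s (s >= 1). *)
Definition seq_of (l : list bool) : nat -> bool := fun s => nth (pred s) l false.

(** P(E) for an event E depending only on the first T coordinates X_1..X_T
    of an i.i.d. Bernoulli(p) sequence. *)
Definition fin_prob (p : R) (T : nat) (E : (nat -> bool) -> bool) : R :=
  fold_right Rplus 0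
    (map (fun l => bweight p l * (if E (seq_of l) then 1 else 0)) (bool_lists T)).

(** Probability of an increasing union of events E_T (E_T depending only on
    X_1..X_T), i.e. of "exists T, E_T", computed by continuity from below:
    P(U_T E_T) = lim_T P(E_T). *)
Definition union_prob (p : R) (E : nat -> (nat -> bool) -> bool) : R :=
  real (Lim_seq (fun T => fin_prob p T (E T))).

(** Z_t = sum_{s=1}^t Delta_s with Delta_s = +c if D_s, -r otherwise,
    where D_s are i.i.d. Bernoulli(1 - theta). *)
Fixpoint Zwalk (c r : nat) (D : nat -> bool) (t : nat) : Z :=
  match t with
  | O => 0%Z
  | S t' => (Zwalk c r D t' + (if D (S t') then Z.of_nat c else (- Z.of_nat r)%Z))%Z
  end.

Definition hit_by (u : Z) (c r : nat) (T : nat) (D : nat -> bool) : bool :=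
  existsb (fun t => Z.leb u (Zwalk c r D t)) (List.seq 0 (S T)).

Definition walk_pi (u : Z) (c r : nat) (theta : R) : R :=
  union_prob (1 - theta) (hit_by u c r).

Definition xi (c : nat) (theta w : R) : R :=
  (((1 - theta) * (INR c + 1) - 1) * w ^ 2 + (2 - (1 - theta) * (INR c + 1)) * w
     - (1 - theta) * w ^ (c + 1) - theta)
  / ((1 - theta) * w ^ (c + 2) - (1 - theta) * w ^ (c + 1) - w ^ 2
     + (1 + theta) * w - theta).

Definition theta_hat (alpha beta S F : nat) : R :=
  (INR alpha + INR S) / (INR alpha + INR beta + INR S + INR F).

Definition trust_ok (c r : nat) (th : R) : bool :=
  if Rlt_dec (INR r * th - INR c * (1 - th)) 0 then false else true.

(** trust_state X t = (hat S_t, hat F_t, A_{t+1}), where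
    hat S_t = sum_{s<=t} X_s 1{A_s = 1}, hat F_t = sum_{s<=t} (1 - X_s) 1{A_s = 1},
    A_{t+1} = 1 iff the trust condition holds at all n <= t. *)
Fixpoint trust_state (alpha beta c r : nat) (X : nat -> bool) (t : nat)
  : nat * nat * bool :=
  match t with
  | O => (0%nat, 0%nat, trust_ok c r (theta_hat alpha beta 0 0))
  | S t' =>
      let '(S0, F0, a) := trust_state alpha beta c r X t' in
      let S1 := if a then (if X (S t') then S (S0) else S0) else S0 in
      let F1 := if a then (if X (S t') then F0 else S F0) else F0 in
      (S1, F1, andb a (trust_ok c r (theta_hat alpha beta S1 F1)))
  end.

Definition S_hat alpha beta c r X t : nat := fst (fst (trust_state alpha beta c r X t)).
Definition F_hat alpha beta c r X t : nat := snd (fst (trust_state alpha beta c r X t)).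
Definition hat_theta_t alpha beta c r X t : R :=
  theta_hat alpha beta (S_hat alpha beta c r X t) (F_hat alpha beta c r X t).

Definition quit_by (alpha beta c r : nat) (T : nat) (X : nat -> bool) : bool :=
  existsb (fun n => negb (trust_ok c r (hat_theta_t alpha beta c r X n)))
          (List.seq 0 (S T)).

Definition p_quit (alpha beta c r : nat) (theta : R) : R :=
  union_prob theta (quit_by alpha beta c r).

(* With [r = 1] the trust condition at time [t] reads
   [alpha - c beta + S_t - c F_t >= 0], and as long as the agent trusts,
   [S_t - c F_t] is minus the walk driven by the complementary coins; so the agent
   quits exactly when that walk reaches [alpha - c beta + 1].

   The hitting probability [pi] is the minimal nonnegative solution of [pi = 1] on
   [u <= 0] and [pi u = (1 - theta) pi (u - c) + theta pi (u + 1)] on [u > 0].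
   With [rho = (1 - theta) / theta], the function [b] given by [b = 1] on [u <= 0] and
   [b u = rho (b (u-1) + ... + b (u-c))] is another solution, and the defect
   [e = b - pi >= 0] telescopes to [theta e u = theta e 1 + (1 - theta) (e (u-1) + ... + e (u-c))].
   This forces [e 1 = 0]: for [(1 - theta) c < theta] because [b] decays geometrically,
   for [(1 - theta) c = theta] because [e] would grow linearly while staying below [1].
   Hence [e = 0].  Finally the recurrence gives [1 - b] a rational generating function,
   [xi w = 1 / (1 - w) - sum_u (1 - b u) w^u], and the Taylor coefficients of [xi]
   at [0] are the [b u]. *)

From Stdlib Require Import Reals ZArith Lra Lia List Bool.
From Coquelicot Require Import Coquelicot.
Open Scope R_scope.

Definition fin_expect (p : R) (T : nat) (f : list bool -> R) : R :=
  fold_right Rplus 0 (map (fun l => bweight p l * f l) (bool_lists T)).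

Lemma fin_prob_expect p T E :
  fin_prob p T E = fin_expect p T (fun l => if E (seq_of l) then 1 else 0).
Proof. reflexivity. Qed.

Lemma fin_expect_0 p f : fin_expect p 0 f = f nil.
Proof. unfold fin_expect; simpl; ring. Qed.

Lemma fin_expect_S p T f :
  fin_expect p (S T) f
  = p * fin_expect p T (fun l => f (true :: l))
    + (1 - p) * fin_expect p T (fun l => f (false :: l)).
Proof.
  unfold fin_expect; simpl bool_lists.
  induction (bool_lists T) as [|l L IH]; simpl; [ring|].
  rewrite IH; ring.
Qed.

Lemma fin_expect_ext p T f g :
  (forall l, length l = T -> f l = g l) -> fin_expect p T f = fin_expect p T g.
Proof.
  revert f g; induction T as [|T IH]; intros f g Hfg.
  - rewrite !fin_expect_0; apply Hfg; reflexivity.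
  - rewrite !fin_expect_S.
    f_equal; f_equal; apply IH; intros l Hl; apply Hfg; simpl; lia.
Qed.

Lemma fin_expect_1 p T : fin_expect p T (fun _ => 1) = 1.
Proof.
  induction T as [|T IH]; [apply fin_expect_0|].
  rewrite fin_expect_S, IH; ring.
Qed.

Lemma fin_expect_negb p T f :
  fin_expect p T f = fin_expect (1 - p) T (fun l => f (map negb l)).
Proof.
  revert f; induction T as [|T IH]; intros f.
  - rewrite !fin_expect_0; reflexivity.
  - rewrite !fin_expect_S, (IH (fun l => f (true :: l))), (IH (fun l => f (false :: l))).
    simpl; ring.
Qed.

(** * The trust model as a random walk *)

Lemma seq_of_map_negb l s :
  (1 <= s <= length l)%nat -> seq_of (map negb l) s = negb (seq_of l s).
Proof.
  intros Hs; unfold seq_of.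
  rewrite (nth_indep _ false (negb false)) by (rewrite length_map; lia).
  apply map_nth.
Qed.

Definition walk_step (c r : nat) (b : bool) : Z :=
  if b then Z.of_nat c else (- Z.of_nat r)%Z.

Lemma Zwalk_S c r D t : Zwalk c r D (S t) = (Zwalk c r D t + walk_step c r (D (S t)))%Z.
Proof. reflexivity. Qed.

Lemma hit_by_S u c r T D :
  hit_by u c r (S T) D = hit_by u c r T D || (u <=? Zwalk c r D (S T))%Z.
Proof.
  unfold hit_by; rewrite seq_S, existsb_app; simpl; rewrite orb_false_r; reflexivity.
Qed.

Lemma quit_by_S alpha beta c r T X :
  quit_by alpha beta c r (S T) X
  = quit_by alpha beta c r T X || negb (trust_ok c r (hat_theta_t alpha beta c r X (S T))).
Proof.
  unfold quit_by; rewrite seq_S, existsb_app; simpl; rewrite orb_false_r; reflexivity.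
Qed.

Lemma trust_state_flag alpha beta c r X T :
  snd (trust_state alpha beta c r X T) = negb (quit_by alpha beta c r T X).
Proof.
  induction T as [|T IH].
  - unfold quit_by; simpl; rewrite orb_false_r, negb_involutive; reflexivity.
  - rewrite quit_by_S, negb_orb, negb_involutive, <- IH.
    unfold hat_theta_t, S_hat, F_hat; simpl.
    destruct (trust_state alpha beta c r X T) as [[s f] a]; reflexivity.
Qed.

Lemma trust_ok_margin alpha beta c s f :
  (0 < alpha + beta)%nat ->
  trust_ok c 1 (theta_hat alpha beta s f)
  = (0 <=? Z.of_nat alpha - Z.of_nat c * Z.of_nat beta + Z.of_nat s - Z.of_nat c * Z.of_nat f)%Z.
Proof.
  intros Hab; unfold trust_ok, theta_hat.
  set (den := INR alpha + INR beta + INR s + INR f).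
  assert (Hden : 0 < den).
  { pose proof (lt_0_INR _ Hab); rewrite plus_INR in *.
    pose proof (pos_INR s); pose proof (pos_INR f); unfold den; lra. }
  set (m := (Z.of_nat alpha - Z.of_nat c * Z.of_nat beta + Z.of_nat s - Z.of_nat c * Z.of_nat f)%Z).
  assert (Hm : (INR 1 * ((INR alpha + INR s) / den) - INR c * (1 - (INR alpha + INR s) / den)) * den
               = IZR m).
  { unfold m; rewrite minus_IZR, plus_IZR, minus_IZR, !mult_IZR, <- !INR_IZR_INZ.
    simpl INR; unfold den; field; fold den; lra. }
  destruct (Rlt_dec _ 0) as [Hneg|Hnneg]; destruct (Z.leb_spec 0 m) as [Hle|Hlt]; try reflexivity.
  - apply IZR_le in Hle; nra.
  - apply IZR_lt in Hlt; nra.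
Qed.

Section TrustWalk.
Variables (alpha beta c : nat) (X D : nat -> bool).
Hypothesis Hab : (0 < alpha + beta)%nat.

Let margin n :=
  (Z.of_nat (S_hat alpha beta c 1 X n) - Z.of_nat c * Z.of_nat (F_hat alpha beta c 1 X n))%Z.
Let u0 := (Z.of_nat alpha - Z.of_nat c * Z.of_nat beta + 1)%Z.

Lemma trust_ok_hat_theta n :
  trust_ok c 1 (hat_theta_t alpha beta c 1 X n) = (0 <=? u0 - 1 + margin n)%Z.
Proof.
  unfold hat_theta_t; rewrite trust_ok_margin by exact Hab.
  f_equal; unfold u0, margin; lia.
Qed.

Lemma margin_S T :
  quit_by alpha beta c 1 T X = false ->
  margin (S T) = (margin T + if X (S T) then 1 else - Z.of_nat c)%Z.
Proof.
  intros Hq; pose proof (trust_state_flag alpha beta c 1 X T) as Hflag.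
  rewrite Hq in Hflag; unfold margin, S_hat, F_hat in *; simpl.
  destruct (trust_state alpha beta c 1 X T) as [[s f] a]; simpl in *; subst a.
  destruct (X (S T)); cbn [fst snd]; rewrite ?Nat2Z.inj_succ; lia.
Qed.

Lemma margin_walk T :
  (forall s, (1 <= s <= T)%nat -> X s = negb (D s)) ->
  quit_by alpha beta c 1 T X = false -> margin T = (- Zwalk c 1 D T)%Z.
Proof.
  induction T as [|T IH]; intros HXD Hq.
  - unfold margin, S_hat, F_hat; simpl; lia.
  - assert (HqT : quit_by alpha beta c 1 T X = false)
      by (rewrite quit_by_S, orb_false_iff in Hq; apply Hq).
    rewrite margin_S, IH, Zwalk_S, HXD by first [assumption | lia | intros; apply HXD; lia].
    unfold walk_step; destruct (D (S T)); simpl; lia.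
Qed.

Lemma quit_by_hit_by T :
  (forall s, (1 <= s <= T)%nat -> X s = negb (D s)) ->
  quit_by alpha beta c 1 T X = hit_by u0 c 1 T D.
Proof.
  induction T as [|T IH]; intros HXD.
  - unfold quit_by, hit_by; simpl; rewrite !orb_false_r.
    rewrite trust_ok_hat_theta; apply eq_iff_eq_true.
    rewrite negb_true_iff, Z.leb_gt, Z.leb_le; unfold margin, S_hat, F_hat; simpl; lia.
  - rewrite quit_by_S, hit_by_S, IH by (intros; apply HXD; lia).
    destruct (hit_by u0 c 1 T D) eqn:Hhit; [reflexivity|cbn [orb]].
    assert (HqT : quit_by alpha beta c 1 T X = false)
      by (rewrite IH; auto; intros; apply HXD; lia).
    rewrite trust_ok_hat_theta, margin_S, margin_walk, Zwalk_S, HXD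
      by first [assumption | lia | intros; apply HXD; lia].
    apply eq_iff_eq_true; rewrite negb_true_iff, Z.leb_gt, Z.leb_le.
    unfold walk_step; destruct (D (S T)); simpl; lia.
Qed.

End TrustWalk.

Lemma p_quit_walk_pi alpha beta c theta :
  (0 < alpha + beta)%nat ->
  p_quit alpha beta c 1 theta
  = walk_pi (Z.of_nat alpha - Z.of_nat c * Z.of_nat beta + 1)%Z c 1 theta.
Proof.
  intros Hab; unfold p_quit, walk_pi, union_prob; f_equal.
  apply Lim_seq_ext; intros T.
  rewrite !fin_prob_expect, fin_expect_negb; apply fin_expect_ext; intros l Hl.
  rewrite (quit_by_hit_by alpha beta c (seq_of (map negb l)) (seq_of l) Hab); [reflexivity|].
  intros s Hs; apply seq_of_map_negb; lia.
Qed.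

(** * Hitting probabilities *)

Lemma Zwalk_cons c r b l t :
  Zwalk c r (seq_of (b :: l)) (S t) = (walk_step c r b + Zwalk c r (seq_of l) t)%Z.
Proof.
  induction t as [|t IH].
  - unfold walk_step; destruct b; simpl; lia.
  - rewrite Zwalk_S, IH, (Zwalk_S c r (seq_of l) t).
    change (seq_of (b :: l) (S (S t))) with (seq_of l (S t)); lia.
Qed.

Lemma hit_by_cons u c r T b l :
  hit_by u c r (S T) (seq_of (b :: l))
  = (u <=? 0)%Z || hit_by (u - walk_step c r b) c r T (seq_of l).
Proof.
  unfold hit_by; change (seq 0 (S (S T))) with (0%nat :: seq 1 (S T)).
  rewrite <- seq_shift; cbn [existsb Zwalk]; f_equal.
  induction (seq 0 (S T)) as [|t ts IH]; [reflexivity|]; cbn [map existsb].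
  rewrite IH, Zwalk_cons; f_equal.
  apply eq_iff_eq_true; rewrite !Z.leb_le; lia.
Qed.

Fixpoint hit_fin (c r : nat) (theta : R) (T : nat) (u : Z) : R :=
  if (u <=? 0)%Z then 1 else
  match T with
  | O => 0
  | S T => (1 - theta) * hit_fin c r theta T (u - Z.of_nat c)
           + theta * hit_fin c r theta T (u + Z.of_nat r)
  end.

Lemma fin_prob_hit_by c r theta T u :
  fin_prob (1 - theta) T (hit_by u c r T) = hit_fin c r theta T u.
Proof.
  revert u; induction T as [|T IH]; intros u.
  - rewrite fin_prob_expect, fin_expect_0; unfold hit_by; simpl.
    destruct (u <=? 0)%Z; reflexivity.
  - rewrite fin_prob_expect, fin_expect_S.
    do 2 erewrite (fin_expect_ext _ _
                     (fun l => if hit_by u c r (S T) (seq_of (_ :: l)) then 1 else 0))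
      by (intros l _; rewrite hit_by_cons; reflexivity).
    simpl hit_fin; destruct (u <=? 0)%Z; simpl orb.
    + rewrite !fin_expect_1; ring.
    + rewrite <- !fin_prob_expect, !IH; unfold walk_step.
      replace (u - - Z.of_nat r)%Z with (u + Z.of_nat r)%Z by lia; ring.
Qed.

Definition walk_harmonic (c r : nat) (theta : R) (f : Z -> R) : Prop :=
  forall u, (0 < u)%Z ->
  f u = (1 - theta) * f (u - Z.of_nat c)%Z + theta * f (u + Z.of_nat r)%Z.

Section HittingProbability.
Variables (c r : nat) (theta : R).
Hypothesis Htheta : 0 <= theta <= 1.

Lemma hit_fin_le0 T u : (u <= 0)%Z -> hit_fin c r theta T u = 1.
Proof. intros Hu; apply Z.leb_le in Hu; destruct T; simpl; rewrite Hu; reflexivity. Qed.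

Lemma hit_fin_S T u : (0 < u)%Z ->
  hit_fin c r theta (S T) u
  = (1 - theta) * hit_fin c r theta T (u - Z.of_nat c)
    + theta * hit_fin c r theta T (u + Z.of_nat r).
Proof. intros Hu; simpl; destruct (Z.leb_spec u 0); [lia|reflexivity]. Qed.

Lemma hit_fin_bounds T u : 0 <= hit_fin c r theta T u <= 1.
Proof.
  revert u; induction T as [|T IH]; intros u; simpl; destruct (u <=? 0)%Z; try lra.
  pose proof (IH (u - Z.of_nat c)%Z); pose proof (IH (u + Z.of_nat r)%Z); nra.
Qed.

Lemma hit_fin_incr T u : hit_fin c r theta T u <= hit_fin c r theta (S T) u.
Proof.
  revert u; induction T as [|T IH]; intros u;
    destruct (Z.le_gt_cases u 0) as [Hu|Hu];
    try (rewrite !hit_fin_le0 by exact Hu; lra).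
  - change (hit_fin c r theta 0 u) with (if (u <=? 0)%Z then 1 else 0).
    destruct (Z.leb_spec u 0); [lia|]; apply hit_fin_bounds.
  - rewrite (hit_fin_S T), (hit_fin_S (S T)) by lia.
    pose proof (IH (u - Z.of_nat c)%Z); pose proof (IH (u + Z.of_nat r)%Z); nra.
Qed.

Lemma walk_pi_Lim_seq u :
  walk_pi u c r theta = real (Lim_seq (fun T => hit_fin c r theta T u)).
Proof. unfold walk_pi, union_prob; f_equal; apply Lim_seq_ext; intros T; apply fin_prob_hit_by. Qed.

Lemma walk_pi_lim u :
  is_lim_seq (fun T => hit_fin c r theta T u) (walk_pi u c r theta).
Proof.
  destruct (ex_finite_lim_seq_incr (fun T => hit_fin c r theta T u) 1) as [l Hl].
  - intros T; apply hit_fin_incr.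
  - intros T; apply hit_fin_bounds.
  - rewrite walk_pi_Lim_seq, (is_lim_seq_unique _ _ Hl); exact Hl.
Qed.

Lemma walk_pi_bounds u : 0 <= walk_pi u c r theta <= 1.
Proof.
  split.
  - change (Rbar_le 0 (walk_pi u c r theta)).
    apply (is_lim_seq_le (fun _ => 0) (fun T => hit_fin c r theta T u));
      auto using walk_pi_lim, is_lim_seq_const.
    intros T; apply hit_fin_bounds.
  - change (Rbar_le (walk_pi u c r theta) 1).
    apply (is_lim_seq_le (fun T => hit_fin c r theta T u) (fun _ => 1));
      auto using walk_pi_lim, is_lim_seq_const.
    intros T; apply hit_fin_bounds.
Qed.

Lemma walk_pi_le0 u : (u <= 0)%Z -> walk_pi u c r theta = 1.
Proof.
  intros Hu; rewrite walk_pi_Lim_seq, (Lim_seq_ext _ (fun _ => 1)), Lim_seq_const; [reflexivity|].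
  intros T; apply hit_fin_le0, Hu.
Qed.

Lemma walk_pi_harmonic : walk_harmonic c r theta (fun u => walk_pi u c r theta).
Proof.
  intros u Hu.
  assert (Hlim : is_lim_seq (fun T => hit_fin c r theta (S T) u)
                   ((1 - theta) * walk_pi (u - Z.of_nat c) c r theta
                    + theta * walk_pi (u + Z.of_nat r) c r theta)).
  { apply (is_lim_seq_ext (fun T => (1 - theta) * hit_fin c r theta T (u - Z.of_nat c)
                                    + theta * hit_fin c r theta T (u + Z.of_nat r))).
    - intros T; symmetry; apply hit_fin_S, Hu.
    - apply is_lim_seq_plus'; apply is_lim_seq_mult'; auto using is_lim_seq_const, walk_pi_lim. }
  apply (is_lim_seq_incr_1 (fun T => hit_fin c r theta T u)), is_lim_seq_unique in Hlim.
  rewrite walk_pi_Lim_seq, Hlim; reflexivity.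
Qed.

Lemma walk_pi_minimal (f : Z -> R) :
  (forall u, 0 <= f u) -> (forall u, (u <= 0)%Z -> f u = 1) -> walk_harmonic c r theta f ->
  forall u, walk_pi u c r theta <= f u.
Proof.
  intros Hf0 Hf1 Hharm u.
  assert (Hfin : forall T u, hit_fin c r theta T u <= f u).
  { induction T as [|T IH]; intros v; destruct (Z.le_gt_cases v 0) as [Hv|Hv];
      try (rewrite hit_fin_le0, Hf1 by exact Hv; lra).
    - change (hit_fin c r theta 0 v) with (if (v <=? 0)%Z then 1 else 0).
      destruct (Z.leb_spec v 0); [lia|apply Hf0].
    - rewrite hit_fin_S, Hharm by exact Hv.
      pose proof (IH (v - Z.of_nat c)%Z); pose proof (IH (v + Z.of_nat r)%Z); nra. }
  change (Rbar_le (walk_pi u c r theta) (f u)).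
  apply (is_lim_seq_le (fun T => hit_fin c r theta T u) (fun _ => f u));
    auto using walk_pi_lim, is_lim_seq_const.
Qed.

End HittingProbability.

(** * An explicit solution of the hitting equation *)

Fixpoint back_sum (f : Z -> R) (u : Z) (n : nat) : R :=
  match n with
  | O => 0
  | S n => f u + back_sum f (u - 1)%Z n
  end.

Lemma back_sum_shift f u n :
  back_sum f u n + f (u - Z.of_nat n)%Z = f u + back_sum f (u - 1)%Z n.
Proof.
  revert u; induction n as [|n IH]; intros u; simpl back_sum.
  - replace (u - Z.of_nat 0)%Z with u by lia; ring.
  - rewrite <- (IH (u - 1)%Z).
    replace (u - 1 - Z.of_nat n)%Z with (u - Z.of_nat (S n))%Z by lia; ring.
Qed.

Lemma back_sum_le f g u n :
  (forall k, (k < n)%nat -> f (u - Z.of_nat k)%Z <= g (u - Z.of_nat k)%Z) ->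
  back_sum f u n <= back_sum g u n.
Proof.
  revert u; induction n as [|n IH]; intros u Hfg; simpl; [lra|].
  apply Rplus_le_compat.
  - specialize (Hfg 0%nat ltac:(lia)); rewrite Z.sub_0_r in Hfg; exact Hfg.
  - apply IH; intros k Hk.
    replace (u - 1 - Z.of_nat k)%Z with (u - Z.of_nat (S k))%Z by lia; apply Hfg; lia.
Qed.

Lemma back_sum_ext f g u n :
  (forall k, (k < n)%nat -> f (u - Z.of_nat k)%Z = g (u - Z.of_nat k)%Z) ->
  back_sum f u n = back_sum g u n.
Proof.
  intros Hfg; apply Rle_antisym; apply back_sum_le; intros k Hk; rewrite Hfg by exact Hk; lra.
Qed.

Lemma back_sum_const a u n : back_sum (fun _ => a) u n = INR n * a.
Proof.
  revert u; induction n as [|n IH]; intros u; simpl back_sum; [simpl; ring|].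
  rewrite IH, S_INR; ring.
Qed.

Lemma back_sum_scal a f u n : back_sum (fun v => a * f v) u n = a * back_sum f u n.
Proof. revert u; induction n as [|n IH]; intros u; simpl back_sum; [ring|]; rewrite IH; ring. Qed.

Lemma Z_le0_strong_ind (P : Z -> Prop) :
  (forall u, (u <= 0)%Z -> P u) ->
  (forall u, (0 < u)%Z -> (forall v, (v < u)%Z -> P v) -> P u) ->
  forall u, P u.
Proof.
  intros Hbase Hstep.
  assert (Hbelow : forall n u, (u < Z.of_nat n)%Z -> P u).
  { induction n as [|n IH]; intros u Hu; [apply Hbase; lia|].
    destruct (Z.le_gt_cases u 0); [apply Hbase; lia|].
    apply Hstep; [lia|]; intros v Hv; apply IH; lia. }
  intros u; apply (Hbelow (S (Z.to_nat u))); lia.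
Qed.

(* The fuel [Z.to_nat u + 1] suffices since every recursive call decreases [u]. *)
Fixpoint walk_sol_fuel (c : nat) (rho : R) (n : nat) (u : Z) : R :=
  match n with
  | O => 1
  | S n => if (u <=? 0)%Z then 1 else rho * back_sum (walk_sol_fuel c rho n) (u - 1) c
  end.

Definition walk_sol (c : nat) (rho : R) (u : Z) : R :=
  walk_sol_fuel c rho (S (Z.to_nat u)) u.

Lemma walk_sol_fuel_enough c rho n m u :
  (Z.to_nat u < n)%nat -> (Z.to_nat u < m)%nat ->
  walk_sol_fuel c rho n u = walk_sol_fuel c rho m u.
Proof.
  revert m u; induction n as [|n IH]; intros m u Hn Hm; [lia|].
  destruct m as [|m]; [lia|]; simpl.
  destruct (Z.leb_spec u 0); [reflexivity|].
  f_equal; apply back_sum_ext; intros k Hk; apply IH; lia.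
Qed.

Lemma walk_sol_le0 c rho u : (u <= 0)%Z -> walk_sol c rho u = 1.
Proof. intros Hu; unfold walk_sol; simpl; destruct (Z.leb_spec u 0); [reflexivity|lia]. Qed.

Lemma walk_sol_pos c rho u :
  (0 < u)%Z -> walk_sol c rho u = rho * back_sum (walk_sol c rho) (u - 1) c.
Proof.
  intros Hu; unfold walk_sol at 1; simpl; destruct (Z.leb_spec u 0); [lia|].
  f_equal; apply back_sum_ext; intros k Hk; apply walk_sol_fuel_enough; lia.
Qed.

Lemma walk_sol_succ c rho u :
  (0 < u)%Z ->
  walk_sol c rho (u + 1)
  = walk_sol c rho u + rho * (walk_sol c rho u - walk_sol c rho (u - Z.of_nat c)).
Proof.
  intros Hu; rewrite (walk_sol_pos c rho (u + 1)) by lia.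
  replace (u + 1 - 1)%Z with u by lia.
  pose proof (back_sum_shift (walk_sol c rho) u c) as Hshift.
  pose proof (walk_sol_pos c rho u Hu) as Hpos.
  nra.
Qed.

Lemma walk_sol_harmonic c theta rho :
  rho * theta = 1 - theta -> walk_harmonic c 1 theta (walk_sol c rho).
Proof.
  intros Hrho u Hu; change (Z.of_nat 1) with 1%Z; rewrite (walk_sol_succ c rho u Hu).
  set (b := walk_sol c rho).
  replace (theta * (b u + rho * (b u - b (u - Z.of_nat c)%Z)))
    with (theta * b u + (rho * theta) * (b u - b (u - Z.of_nat c)%Z)) by ring.
  rewrite Hrho; ring.
Qed.

Lemma walk_sol_critical c rho : rho * INR c = 1 -> forall u, walk_sol c rho u = 1.
Proof.
  intros Hcrit u; induction u as [u Hu|u Hu IH] using Z_le0_strong_ind.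
  - apply walk_sol_le0, Hu.
  - rewrite walk_sol_pos by exact Hu.
    rewrite (back_sum_ext _ (fun _ => 1)), back_sum_const by (intros k Hk; apply IH; lia); lra.
Qed.

Section WalkSolution.
Variables (c : nat) (rho : R).
Hypothesis Hrho : 0 <= rho.
Hypothesis Hrho_c : rho * INR c <= 1.

Let b := walk_sol c rho.

Lemma walk_sol_bounds u : 0 <= b u <= 1.
Proof.
  induction u as [u Hu|u Hu IH] using Z_le0_strong_ind.
  - unfold b; rewrite walk_sol_le0 by exact Hu; lra.
  - unfold b; rewrite walk_sol_pos by exact Hu; fold b.
    assert (Hsum : back_sum (fun _ => 0) (u - 1) c <= back_sum b (u - 1) c
                   <= back_sum (fun _ => 1) (u - 1) c)
      by (split; apply back_sum_le; intros k Hk; apply IH; lia).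
    rewrite !back_sum_const in Hsum; split; nra.
Qed.

Lemma walk_sol_antitone u v : (v <= u)%Z -> b u <= b v.
Proof.
  revert v; induction u as [u Hu|u Hu IH] using Z_le0_strong_ind; intros v Hv.
  - unfold b; rewrite !walk_sol_le0 by lia; lra.
  - assert (Hstep : b u <= b (u - 1)%Z).
    { destruct (Z.eq_dec u 1) as [->|Hne].
      - unfold b; rewrite walk_sol_pos, (walk_sol_le0 c rho (1 - 1)) by lia.
        rewrite (back_sum_ext _ (fun _ => 1)), back_sum_const
          by (intros k Hk; apply walk_sol_le0; lia); lra.
      - replace u with (u - 1 + 1)%Z at 1 by lia.
        unfold b; rewrite walk_sol_succ by lia; fold b.
        pose proof (IH (u - 1)%Z ltac:(lia) (u - 1 - Z.of_nat c)%Z ltac:(lia)); nra. }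
    destruct (Z.eq_dec v u) as [->|Hne]; [lra|].
    pose proof (IH (u - 1)%Z ltac:(lia) v ltac:(lia)); lra.
Qed.

Lemma walk_sol_decay u : (0 < u)%Z -> b u <= rho * INR c * b (u - Z.of_nat c)%Z.
Proof.
  intros Hu; unfold b; rewrite walk_sol_pos by exact Hu; fold b.
  rewrite Rmult_assoc, <- (back_sum_const (b (u - Z.of_nat c)%Z) (u - 1)%Z c).
  apply Rmult_le_compat_l; [exact Hrho|].
  apply back_sum_le; intros j Hj; apply walk_sol_antitone; lia.
Qed.

Lemma walk_sol_geometric k : b (1 + Z.of_nat (k * c))%Z <= (rho * INR c) ^ S k.
Proof.
  assert (Hrc : 0 <= rho * INR c) by (apply Rmult_le_pos; [exact Hrho | apply pos_INR]).
  induction k as [|k IH].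
  - pose proof (walk_sol_decay 1%Z ltac:(lia)); pose proof (walk_sol_bounds (1 - Z.of_nat c)%Z).
    change (1 + Z.of_nat (0 * c))%Z with 1%Z; rewrite pow_1; nra.
  - pose proof (walk_sol_decay (1 + Z.of_nat (S k * c))%Z ltac:(lia)) as Hk.
    replace (1 + Z.of_nat (S k * c) - Z.of_nat c)%Z with (1 + Z.of_nat (k * c))%Z in Hk by lia.
    rewrite <- tech_pow_Rmult; nra.
Qed.

End WalkSolution.

(** * Uniqueness *)

Lemma drift_ratio_le_1 c theta :
  0 < theta -> (1 - theta) * INR c <= theta -> (1 - theta) / theta * INR c <= 1.
Proof.
  intros Htheta Hdrift; apply (Rmult_le_reg_l theta); [exact Htheta|].
  replace (theta * ((1 - theta) / theta * INR c)) with ((1 - theta) * INR c) by (field; lra).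
  lra.
Qed.

Section Defect.
Variables (c : nat) (theta : R) (e : Z -> R).
Hypothesis Htheta : 0 < theta < 1.
Hypothesis He_le0 : forall u, (u <= 0)%Z -> e u = 0.
Hypothesis He_harmonic : walk_harmonic c 1 theta e.

Lemma harmonic_telescope u :
  (0 < u)%Z -> theta * e u = theta * e 1%Z + (1 - theta) * back_sum e (u - 1) c.
Proof.
  intros Hu; replace u with (Z.of_nat (Z.to_nat (u - 1)) + 1)%Z by lia.
  induction (Z.to_nat (u - 1)) as [|n IH]; clear u Hu.
  - rewrite (back_sum_ext _ (fun _ => 0)), back_sum_const by (intros k Hk; apply He_le0; lia).
    simpl; ring.
  - set (u := (Z.of_nat n + 1)%Z) in IH.
    replace (Z.of_nat (S n) + 1)%Z with (u + 1)%Z by (unfold u; lia).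
    replace (u + 1 - 1)%Z with u by lia.
    pose proof (He_harmonic u ltac:(unfold u; lia)) as Hharm; change (Z.of_nat 1) with 1%Z in Hharm.
    pose proof (back_sum_shift e u c) as Hshift.
    replace (u - 1)%Z with (Z.of_nat n) in IH by (unfold u; lia).
    replace (u - 1)%Z with (Z.of_nat n) in Hshift by (unfold u; lia).
    nra.
Qed.

Hypothesis He_nonneg : forall u, 0 <= e u.

Lemma defect_ge_one u : (0 < u)%Z -> e 1%Z <= e u.
Proof.
  intros Hu; pose proof (harmonic_telescope u Hu) as Htel.
  assert (Hsum : back_sum (fun _ => 0) (u - 1) c <= back_sum e (u - 1) c)
    by (apply back_sum_le; intros; apply He_nonneg).
  rewrite back_sum_const in Hsum; nra.
Qed.

Let rho := (1 - theta) / theta.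

Lemma defect_one_subcritical :
  rho * INR c < 1 -> (forall u, e u <= walk_sol c rho u) -> e 1%Z = 0.
Proof.
  intros Hsub He_sol.
  assert (Hrho : 0 <= rho) by (apply Rdiv_le_0_compat; lra).
  assert (Hrc : 0 <= rho * INR c) by (apply Rmult_le_pos; [exact Hrho | apply pos_INR]).
  apply Rle_antisym; [|apply He_nonneg].
  apply Rnot_lt_le; intros Hpos.
  assert (Habs : Rabs (rho * INR c) < 1) by (rewrite Rabs_pos_eq; assumption).
  destruct (pow_lt_1_zero _ Habs _ Hpos) as [N HN].
  specialize (HN (S N) ltac:(lia)); rewrite Rabs_pos_eq in HN by (apply pow_le; exact Hrc).
  pose proof (defect_ge_one (1 + Z.of_nat (N * c))%Z ltac:(lia)).
  pose proof (He_sol (1 + Z.of_nat (N * c))%Z).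
  pose proof (walk_sol_geometric c rho Hrho (Rlt_le _ _ Hsub) N).
  lra.
Qed.

Lemma defect_one_critical :
  (1 - theta) * INR c = theta -> (forall u, e u <= 1) -> e 1%Z = 0.
Proof.
  intros Hcrit He_le1; set (m := e 1%Z).
  assert (Hm : 0 <= m) by apply He_nonneg.
  assert (Hc : 0 < INR c) by (destruct c; simpl in Hcrit; [lra | apply lt_0_INR; lia]).
  assert (Hlin : forall u, m * IZR u <= INR c * e u).
  { intros u; induction u as [u Hu|u Hu IH] using Z_le0_strong_ind.
    - rewrite He_le0 by exact Hu; apply IZR_le in Hu; nra.
    - pose proof (harmonic_telescope u Hu) as Htel; fold m in Htel.
      assert (Hsum : back_sum (fun _ => m * IZR (u - Z.of_nat c)) (u - 1) c
                     <= back_sum (fun v => INR c * e v) (u - 1) c).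
      { apply back_sum_le; intros k Hk.
        pose proof (IH (u - 1 - Z.of_nat k)%Z ltac:(lia)) as IHk.
        assert (IZR (u - Z.of_nat c) <= IZR (u - 1 - Z.of_nat k)) by (apply IZR_le; lia).
        nra. }
      rewrite back_sum_const, back_sum_scal, minus_IZR, <- INR_IZR_INZ in Hsum.
      assert (HW : m * (IZR u - INR c) <= back_sum e (u - 1) c)
        by (apply (Rmult_le_reg_l (INR c)); assumption).
      assert (Hceu : INR c * e u = INR c * m + back_sum e (u - 1) c).
      { apply (Rmult_eq_reg_l (1 - theta)); [|lra].
        rewrite Rmult_plus_distr_l, <- !Rmult_assoc, Hcrit; exact Htel. }
      lra. }
  apply Rle_antisym; [|apply He_nonneg].
  apply Rnot_lt_le; intros Hpos.
  destruct (INR_unbounded (INR c / m)) as [N HN].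
  pose proof (Hlin (Z.of_nat N)) as HlinN; rewrite <- INR_IZR_INZ in HlinN.
  pose proof (He_le1 (Z.of_nat N)) as Hle1.
  assert (HcN : INR c < INR N * m).
  { replace (INR c) with (INR c / m * m) by (field; lra).
    apply Rmult_lt_compat_r; lra. }
  nra.
Qed.

Lemma defect_zero :
  (1 - theta) * INR c <= theta -> (forall u, e u <= walk_sol c rho u) -> forall u, e u = 0.
Proof.
  intros Hdrift He_sol.
  pose proof (drift_ratio_le_1 c theta (proj1 Htheta) Hdrift) as Hrc.
  assert (He1 : e 1%Z = 0).
  { destruct (Rle_lt_or_eq_dec _ _ Hrc) as [Hsub|Hcrit].
    - apply defect_one_subcritical; assumption.
    - apply defect_one_critical.
      + transitivity (theta * (rho * INR c)); unfold rho; [field; lra | rewrite Hcrit; ring].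
      + intros u; rewrite <- (walk_sol_critical c rho Hcrit u); apply He_sol. }
  intros u; induction u as [u Hu|u Hu IH] using Z_le0_strong_ind; [apply He_le0, Hu|].
  pose proof (harmonic_telescope u Hu) as Htel.
  rewrite He1, (back_sum_ext _ (fun _ => 0)), back_sum_const in Htel
    by (intros k Hk; apply IH; lia).
  apply (Rmult_eq_reg_l theta); lra.
Qed.

End Defect.

Lemma walk_pi_eq_walk_sol c theta :
  0 < theta < 1 -> (1 - theta) * INR c <= theta ->
  forall u, walk_pi u c 1 theta = walk_sol c ((1 - theta) / theta) u.
Proof.
  intros Htheta Hdrift.
  set (rho := (1 - theta) / theta).
  assert (Hrho : 0 <= rho) by (apply Rdiv_le_0_compat; lra).
  pose proof (drift_ratio_le_1 c theta (proj1 Htheta) Hdrift) as Hrc.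
  assert (Hsol_harm : walk_harmonic c 1 theta (walk_sol c rho))
    by (apply walk_sol_harmonic; unfold rho; field; lra).
  assert (Hpi : 0 <= theta <= 1) by lra.
  assert (Hdefect : forall u, walk_sol c rho u - walk_pi u c 1 theta = 0).
  { apply (defect_zero c theta); auto.
    - intros u Hu; rewrite walk_sol_le0, walk_pi_le0 by assumption; ring.
    - intros u Hu; rewrite Hsol_harm, (walk_pi_harmonic c 1 theta Hpi) by exact Hu; ring.
    - intros u; enough (walk_pi u c 1 theta <= walk_sol c rho u) by lra.
      apply walk_pi_minimal; auto.
      + intros; apply walk_sol_bounds; assumption.
      + intros; apply walk_sol_le0; assumption.
    - intros u; pose proof (walk_pi_bounds c 1 theta Hpi u); unfold rho; lra. }
  intros u; specialize (Hdefect u); lra.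
Qed.

(** * The generating function *)

Lemma CV_radius_ge_1 (a : nat -> R) M :
  (forall n, Rabs (a n) <= M) -> Rbar_le 1 (CV_radius a).
Proof.
  intros Ha; apply (proj1 (CV_radius_bounded a)).
  exists M; intros n; rewrite pow1, Rmult_1_r; apply Ha.
Qed.

Lemma ex_pseries_bounded (a : nat -> R) M x :
  (forall n, Rabs (a n) <= M) -> Rabs x < 1 -> ex_pseries a x.
Proof.
  intros Ha Hx; apply CV_radius_inside.
  apply (Rbar_lt_le_trans _ 1); [exact Hx | apply (CV_radius_ge_1 a M Ha)].
Qed.

Lemma PSeries_monomial1 k x :
  Rabs x < 1 -> PSeries (fun n => if (n =? 1)%nat then k else 0) x = k * x.
Proof.
  intros Hx; set (const_k := fun n => if (n =? 0)%nat then k else 0).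
  rewrite (PSeries_ext _ (PS_incr_1 const_k)) by (intros [|[|n]]; reflexivity).
  rewrite PSeries_incr_1, PSeries_decr_1.
  - rewrite (PSeries_ext _ (fun _ => 0)), PSeries_const_0 by (intros n; reflexivity).
    unfold const_k; simpl; ring.
  - apply (ex_pseries_bounded _ (Rabs k)); [|exact Hx].
    intros [|n]; unfold const_k; simpl Nat.eqb; cbv iota;
      [apply Rle_refl | rewrite Rabs_R0; apply Rabs_pos].
Qed.

Lemma PSeries_ones x : Rabs x < 1 -> PSeries (fun _ => 1) x = / (1 - x).
Proof.
  intros Hx; apply is_pseries_unique, is_pseries_R.
  apply (is_series_ext (fun n => x ^ n)).
  - intros n; symmetry; apply Rmult_1_l.
  - apply is_series_geom, Hx.
Qed.

Lemma PS_incr_n_of_nat (f : Z -> R) k n :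
  (forall u, (u < 0)%Z -> f u = 0) ->
  PS_incr_n (fun m => f (Z.of_nat m)) k n = f (Z.of_nat n - Z.of_nat k)%Z.
Proof.
  intros Hf; rewrite PS_incr_n_simplify.
  destruct (Compare_dec.le_lt_dec k n).
  - f_equal; lia.
  - symmetry; apply Hf; lia.
Qed.

Section GeneratingFunction.
Variables (c : nat) (theta : R).
Hypothesis Htheta : 0 < theta < 1.
Hypothesis Hdrift : (1 - theta) * INR c <= theta.

Let rho := (1 - theta) / theta.
Let a (n : nat) : R := walk_sol c rho (Z.of_nat n).
Let miss (u : Z) : R := 1 - walk_sol c rho u.
Let h (n : nat) : R := miss (Z.of_nat n).

Lemma walk_sol_abs_le_1 n : Rabs (a n) <= 1 /\ Rabs (h n) <= 1.
Proof.
  pose proof (walk_sol_bounds c rho ltac:(apply Rdiv_le_0_compat; lra)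
                (drift_ratio_le_1 c theta (proj1 Htheta) Hdrift) (Z.of_nat n)).
  unfold h, miss, a; rewrite !Rabs_pos_eq; lra.
Qed.

Lemma miss_neg u : (u < 0)%Z -> miss u = 0.
Proof. intros Hu; unfold miss; rewrite walk_sol_le0 by lia; ring. Qed.

Lemma miss_coef n :
  theta * h n - PS_incr_n h 1 n + (1 - theta) * PS_incr_n h (S c) n
  = if (n =? 1)%nat then theta - (1 - theta) * INR c else 0.
Proof.
  unfold h; rewrite !PS_incr_n_of_nat by exact miss_neg; unfold miss.
  destruct n as [|[|n]]; simpl Nat.eqb; cbv iota.
  - rewrite !walk_sol_le0 by lia; ring.
  - rewrite (walk_sol_pos c rho (Z.of_nat 1)), !walk_sol_le0 by lia.
    rewrite (back_sum_ext _ (fun _ => 1)), back_sum_const by (intros; apply walk_sol_le0; lia).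
    unfold rho; field; lra.
  - pose proof (walk_sol_harmonic c theta rho ltac:(unfold rho; field; lra)
                  (Z.of_nat n + 1)%Z ltac:(lia)) as Hharm.
    replace (Z.of_nat (S (S n))) with (Z.of_nat n + 1 + Z.of_nat 1)%Z by lia.
    replace (Z.of_nat n + 1 + Z.of_nat 1 - Z.of_nat 1)%Z with (Z.of_nat n + 1)%Z by lia.
    replace (Z.of_nat n + 1 + Z.of_nat 1 - Z.of_nat (S c))%Z
      with (Z.of_nat n + 1 - Z.of_nat c)%Z by lia.
    rewrite Hharm; ring.
Qed.

Lemma ex_pseries_miss w : Rabs w < 1 -> ex_pseries h w.
Proof. apply (ex_pseries_bounded _ 1); intros n; apply walk_sol_abs_le_1. Qed.

Lemma miss_generating_function w :
  Rabs w < 1 ->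
  (theta - w + (1 - theta) * w ^ S c) * PSeries h w = (theta - (1 - theta) * INR c) * w.
Proof.
  intros Hw; pose proof (ex_pseries_miss w Hw) as Hh.
  assert (Hscal : forall (k : R) (b : nat -> R), ex_pseries b w -> ex_pseries (PS_scal k b) w)
    by (intros k b Hb; apply ex_pseries_scal; [apply Rmult_comm | exact Hb]).
  rewrite <- (PSeries_monomial1 _ _ Hw).
  rewrite (PSeries_ext (fun n => if (n =? 1)%nat then theta - (1 - theta) * INR c else 0)
                       (PS_plus (PS_minus (PS_scal theta h) (PS_incr_n h 1))
                                  (PS_scal (1 - theta) (PS_incr_n h (S c)))))
    by (intros n; rewrite <- miss_coef; reflexivity).
  rewrite PSeries_plus, PSeries_minus, !PSeries_scal, !PSeries_incr_n;
    auto using ex_pseries_minus, ex_pseries_incr_n.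
  ring.
Qed.

(* [xi] factors as [num / ((w - 1) (theta - w + (1 - theta) w^(c+1)))], and the
   second factor of the denominator stays away from [0] for [|w| < theta / 2]. *)
Lemma xi_PSeries w : Rabs w < theta / 2 -> xi c theta w = PSeries a w.
Proof.
  intros Hw; assert (Hw1 : Rabs w < 1) by lra.
  set (E := theta - w + (1 - theta) * w ^ S c).
  assert (HE : 0 < E).
  { assert (Hpow : Rabs w ^ c <= 1)
      by (rewrite <- (pow1 c); apply pow_incr; split; [apply Rabs_pos | lra]).
    assert (Habs : Rabs (w ^ S c) <= Rabs w)
      by (rewrite <- RPow_abs; simpl pow; pose proof (Rabs_pos w); nra).
    pose proof (Rle_abs w); pose proof (Rle_abs (- w ^ S c)); rewrite Rabs_Ropp in *.
    unfold E; nra. }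
  assert (Hh : PSeries h w = (theta - (1 - theta) * INR c) * w / E).
  { pose proof (miss_generating_function w Hw1) as Hgf; fold E in Hgf.
    apply (Rmult_eq_reg_l E); [|lra]; rewrite Hgf; field; lra. }
  assert (Ha : PSeries a w = / (1 - w) - PSeries h w).
  { assert (Hones : ex_pseries (fun _ => 1) w)
      by (apply (ex_pseries_bounded _ 1); [intros n; rewrite Rabs_R1; lra | exact Hw1]).
    rewrite <- (PSeries_ones w Hw1), <- (PSeries_minus _ _ _ Hones (ex_pseries_miss w Hw1)).
    apply PSeries_ext; intros n.
    change (a n = 1 - (1 - a n)); ring. }
  assert (Hw_ne1 : w <> 1) by (intros ->; rewrite Rabs_R1 in Hw1; lra).
  rewrite Ha, Hh; unfold xi, E in *.
  replace (w ^ (c + 1)) with (w * w ^ c) by (rewrite Nat.add_1_r; reflexivity).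
  replace (w ^ (c + 2)) with (w * (w * w ^ c))
    by (rewrite Nat.add_succ_r, Nat.add_1_r; reflexivity).
  change (w ^ S c) with (w * w ^ c) in *.
  remember (w ^ c) as X eqn:HX; clear HX.
  replace ((1 - theta) * (w * (w * X)) - (1 - theta) * (w * X) - w ^ 2 + (1 + theta) * w - theta)
    with ((w - 1) * (theta - w + (1 - theta) * (w * X))) by ring.
  field; split; lra.
Qed.

Lemma Derive_n_xi u :
  Derive_n (xi c theta) u 0 / INR (fact u) = walk_sol c ((1 - theta) / theta) (Z.of_nat u).
Proof.
  assert (Hrad : Rbar_lt 0 (CV_radius a)).
  { apply (Rbar_lt_le_trans _ 1); [simpl; lra|].
    apply (CV_radius_ge_1 a 1); intros n; apply walk_sol_abs_le_1. }
  rewrite (Derive_n_ext_loc _ (PSeries a)).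
  - rewrite Derive_n_coef by exact Hrad; unfold a, rho; field; apply INR_fact_neq_0.
  - assert (Hdelta : 0 < theta / 2) by lra.
    exists (mkposreal _ Hdelta); intros y Hy; apply xi_PSeries.
    change (Rabs (y - 0) < theta / 2) in Hy; rewrite Rminus_0_r in Hy; exact Hy.
Qed.

End GeneratingFunction.

Theorem lemma3p5 (c : nat) (theta : R) :
  (1 <= c)%nat ->
  INR c / (INR c + 1) <= theta -> theta < 1 ->
  (forall u : nat,
      walk_pi (Z.of_nat u) c 1 theta = Derive_n (xi c theta) u 0 / INR (fact u)) /\
  (forall alpha beta : nat, (0 < alpha + beta)%nat ->
      p_quit alpha beta c 1 theta
      = walk_pi (Z.of_nat alpha - Z.of_nat c * Z.of_nat beta + 1)%Z c 1 theta).
Proof.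
  intros Hc Hlow Hhigh.
  assert (Hc_pos : 0 < INR c) by (apply lt_0_INR; lia).
  assert (Hdrift : (1 - theta) * INR c <= theta).
  { apply (Rmult_le_compat_r (INR c + 1)) in Hlow; [|lra].
    unfold Rdiv in Hlow; rewrite Rmult_assoc, Rinv_l, Rmult_1_r in Hlow by lra; lra. }
  assert (Htheta : 0 < theta < 1) by (split; [nra | exact Hhigh]).
  split.
  - intros u; rewrite Derive_n_xi by assumption.
    apply walk_pi_eq_walk_sol; assumption.
  - intros alpha beta Hab; apply p_quit_walk_pi, Hab.
Qed.
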